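(* For every $\varphi\in\Phi_\mathbb{Z}$, $\dim(\varphi)$ is an integer and $$\dim(\varphi)\equiv-\sum_{j=1}^d j\,\mu_{1,j}(\varphi)\pmod{b-1}.$$
   Context: Fix integers $b\ge2$, $d\ge1$. A function $f:\mathbb{R}\to\mathbb{R}\cup\{-\infty\}$ is called strictly increasing if it is nondecreasing and strictly increasing on the set where it is finite. $\Phi$ is the set of $d$-tuples $\varphi=(\varphi_1,\dots,\varphi_d)$ of functions $\mathbb{R}\to\mathbb{R}\cup\{-\infty\}$ such that: (1) $\varphi_1\ge\dots\ge\varphi_d$; (2) each $\varphi_i$ is strictly increasing and right-continuous; (3) for each $i$ there is $q_i\in\mathbb{R}$ such that $\varphi_i$ is finite exactly on $[q_i,+\infty[$, piecewise affine there with derivative $b$ almost everywhere, and $\varphi_i(q)=bq-q_i$ for $q$ large; (4) there exist strictly increasing right-continuous $\psi_1\le\dots\le\psi_d:\mathbb{R}\to\mathbb{R}\cup\{-\infty\}$ with $\#\{i:\varphi_i(q)=\mu\}=\#\{j:\psi_j(\mu)=q\}$ for all $(q,\mu)\in\mathbb{R}^2$ (uniquely determined). $\Phi_\mathbb{Z}$ is the set of $\varphi\in\Phi$ such that each $q_i\in\mathbb{Z}$ and each $\varphi_i$ has all discontinuity points in $\frac1b\mathbb{Z}$. Set $\varphi_i(-\infty)=\psi_j(-\infty)=-\infty$. For $1\le j\le d$, $\mu_{1,j}(\varphi)$ is the infimum of the reals $\mu$ such that either $\varphi_1(\psi_j(\mu))>\mu$, or $\varphi_1(\psi_j(\mu))=\mu$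 and $\#\{i'\le 1:\varphi_{i'}(q)=\mu\}\le\#\{j'\le j:\psi_{j'}(\mu)=q\}$ with $q=\psi_j(\mu)$. With $\mathrm{Leb}$ the Lebesgue measure, $\dim(\varphi):=\sum_{1\le i<i'\le d}\mathrm{Leb}(\varphi_{i'}(\mathbb{R})\setminus\varphi_i(\mathbb{R}))$. *)

From Stdlib Require Import Reals Lra Lia ZArith.
Open Scope R_scope.

(* R ∪ {-∞} is represented by [option R]: [None] = -∞, [Some x] = x. *)
Definition ER := option R.

Definition ole (x y : ER) : Prop :=
  match x, y with
  | None, _ => True
  | Some _, None => False
  | Some a, Some c => a <= c
  end.

Definition olt (x y : ER) : Prop :=
  match x, y with
  | _, None => False
  | None, Some _ => True
  | Some a, Some c => a < c
  end.

Definition eqb_ER (x y : ER) : bool :=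
  match x, y with
  | None, None => true
  | Some a, Some c => if Req_EM_T a c then true else false
  | _, _ => false
  end.

Definition ext_app (f : R -> ER) (o : ER) : ER :=
  match o with None => None | Some q => f q end.

(* strictly increasing in the paper's sense *)
Definition strictly_incr (f : R -> ER) : Prop :=
  (forall x y, x <= y -> ole (f x) (f y)) /\
  (forall x y, x < y -> f x <> None -> f y <> None -> olt (f x) (f y)).

Definition right_cont (f : R -> ER) : Prop :=
  forall x,
    match f x with
    | Some v => forall eps, 0 < eps -> exists delta, 0 < delta /\
                 forall y, x <= y < x + delta ->
                   exists w, f y = Some w /\ Rabs (w - v) < eps
    | None => forall M, exists delta, 0 < delta /\
                 forall y, x <= y < x + delta -> ole (f y) (Some M)
    end.

Definition cont_at (f : R -> ER) (x : R) : Prop :=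
  match f x with
  | Some v => forall eps, 0 < eps -> exists delta, 0 < delta /\
               forall y, Rabs (y - x) < delta ->
                 exists w, f y = Some w /\ Rabs (w - v) < eps
  | None => forall M, exists delta, 0 < delta /\
               forall y, Rabs (y - x) < delta -> ole (f y) (Some M)
  end.

Definition pw_affine_slope (b : R) (f : R -> ER) (q : R) : Prop :=
  exists (m : nat) (t c : nat -> R),
    t O = q /\
    (forall k, (k < m)%nat -> t k < t (S k)) /\
    (forall k, (k < m)%nat -> forall x, t k < x < t (S k) -> f x = Some (b * x + c k)) /\
    (forall x, t m < x -> f x = Some (b * x + c m)).

Definition cond3 (b : nat) (f : R -> ER) (q : R) : Prop :=
  (forall x, f x <> None <-> q <= x) /\
  pw_affine_slope (INR b) f q /\
  (exists T, forall x, T <= x -> f x = Some (INR b * x - q)).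

Fixpoint count_idx (n : nat) (p : nat -> bool) : nat :=
  match n with
  | O => O
  | S m => (count_idx m p + (if p (S m) then 1 else 0))%nat
  end.

Fixpoint rsum (n : nat) (f : nat -> R) : R :=
  match n with
  | O => 0
  | S m => rsum m f + f (S m)
  end.

Definition inPhi (b d : nat) (phi psi : nat -> R -> ER) : Prop :=
  (forall i, (1 <= i < d)%nat -> forall q, ole (phi (S i) q) (phi i q)) /\
  (forall i, (1 <= i <= d)%nat -> strictly_incr (phi i) /\ right_cont (phi i)) /\
  (forall i, (1 <= i <= d)%nat -> exists q : R, cond3 b (phi i) q) /\
  (forall j, (1 <= j < d)%nat -> forall mu, ole (psi j mu) (psi (S j) mu)) /\
  (forall j, (1 <= j <= d)%nat -> strictly_incr (psi j) /\ right_cont (psi j)) /\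
  (forall q mu : R,
     count_idx d (fun i => eqb_ER (phi i q) (Some mu)) =
     count_idx d (fun j => eqb_ER (psi j mu) (Some q))).

Definition inPhiZ (b d : nat) (phi psi : nat -> R -> ER) : Prop :=
  inPhi b d phi psi /\
  (forall i, (1 <= i <= d)%nat ->
     (exists qi : Z, cond3 b (phi i) (IZR qi)) /\
     (forall x, ~ cont_at (phi i) x -> exists n : Z, x = IZR n / INR b)).

Definition is_inf (S : R -> Prop) (m : R) : Prop :=
  (forall s, S s -> m <= s) /\ (forall m', (forall s, S s -> m' <= s) -> m' <= m).

(* Lebesgue (outer) measure: infimum of total lengths of countable covers
   by open intervals (equals the Lebesgue measure on measurable sets). *)
Definition is_Leb (A : R -> Prop) (m : R) : Prop :=
  is_inf (fun s => exists a c : nat -> R,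
            (forall n, a n <= c n) /\
            (forall x, A x -> exists n, a n < x < c n) /\
            infinite_sum (fun n => c n - a n) s) m.

Definition image_diff (phi : nat -> R -> ER) (i i' : nat) (mu : R) : Prop :=
  (exists q, phi i' q = Some mu) /\ ~ (exists q, phi i q = Some mu).

(* the set whose infimum is μ_{1,j}(φ) *)
Definition mu1_set (phi psi : nat -> R -> ER) (j : nat) (mu : R) : Prop :=
  olt (Some mu) (ext_app (phi 1%nat) (psi j mu)) \/
  (exists q : R, psi j mu = Some q /\ phi 1%nat q = Some mu /\
   (count_idx 1 (fun i' => eqb_ER (phi i' q) (Some mu))
    <= count_idx j (fun j' => eqb_ER (psi j' mu) (Some q)))%nat).
  (* note: ext_app (phi 1) (psi j mu) = Some mu forces psi j mu = Some q *)

(* dim(φ) = D, given the values L i i' = Leb(φ_{i'}(R) \ φ_i(R)) *)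
Definition dim_sum (d : nat) (L : nat -> nat -> R) : R :=
  rsum d (fun i' => rsum (i' - 1) (fun i => L i i')).

From Stdlib Require Import Reals Lra Lia ZArith List Classical ClassicalEpsilon.
Open Scope R_scope.

(* Each [phi_i] is affine of slope [b] on finitely many pieces, so its image is a finite
   union of half-open intervals, and all their endpoints fit on one grid [g 0 < ... < g n],
   on whose cells every image indicator [1_i] is constant.  Condition (4) says that the
   number of finite [psi_j mu] is the number of images containing [mu]; since it is
   nondecreasing in [j], [psi_j] is finite exactly on [[M_j, +oo)] for a grid point [M_j],
   and [M_j = mu_{1,j}].  The pointwise identity
     [sum_{i < i'} 1_i' (1 - 1_i) = sum_i (i - 1 - d) 1_i + sum_j j 1_[M_j, +oo)]
   integrates against Lebesgue measure on [[g 0, g n)] to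
     [dim = sum_i (i - 1 - d) (g n - b q_i + q_i) + sum_j j (g n - M_j)],
   i.e. [dim + sum_j j M_j = (b - 1) sum_i (d + 1 - i) q_i].  Integrating the counting
   identity [sum_i 1_i = sum_j 1_[M_j, +oo)] against [d sin^2 (pi x)] instead shows that
   every [M_j] is an integer, because the pieces of [phi_i] only jump where [b t] is an
   integer. *)

Fixpoint sum_lt (n : nat) (f : nat -> R) : R :=
  match n with O => 0 | S m => sum_lt m f + f m end.

Lemma sum_lt_ext n f g : (forall k, (k < n)%nat -> f k = g k) -> sum_lt n f = sum_lt n g.
Proof. induction n; simpl; intros H; auto. rewrite IHn, (H n); auto. Qed.

Lemma sum_lt_le n f g : (forall k, (k < n)%nat -> f k <= g k) -> sum_lt n f <= sum_lt n g.
Proof.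
  induction n; simpl; intros H; [lra|].
  assert (f n <= g n) by auto. assert (sum_lt n f <= sum_lt n g) by auto. lra.
Qed.

Lemma sum_lt_plus n f g : sum_lt n (fun k => f k + g k) = sum_lt n f + sum_lt n g.
Proof. induction n; simpl; lra. Qed.

Lemma sum_lt_minus n f g : sum_lt n (fun k => f k - g k) = sum_lt n f - sum_lt n g.
Proof. induction n; simpl; lra. Qed.

Lemma sum_lt_scal n a f : sum_lt n (fun k => a * f k) = a * sum_lt n f.
Proof. induction n; simpl; [ring|]. rewrite IHn; ring. Qed.

Lemma sum_lt_const n a : sum_lt n (fun _ => a) = INR n * a.
Proof. induction n; simpl sum_lt; [simpl; ring|]. rewrite IHn, S_INR; ring. Qed.

Lemma sum_lt_swap n N (F : nat -> nat -> R) :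
  sum_lt n (fun k => sum_lt N (F k)) = sum_lt N (fun l => sum_lt n (fun k => F k l)).
Proof.
  induction n; simpl.
  - induction N; simpl; lra.
  - rewrite IHn, <- sum_lt_plus. reflexivity.
Qed.

Lemma sum_lt_nonneg n f : (forall k, (k < n)%nat -> 0 <= f k) -> 0 <= sum_lt n f.
Proof.
  intros H. rewrite <- (Rmult_0_r (INR n)), <- sum_lt_const. apply sum_lt_le; auto.
Qed.

Lemma sum_lt_telescope (h : nat -> R) n : sum_lt n (fun k => h (S k) - h k) = h n - h O.
Proof. induction n; simpl; [ring|]. rewrite IHn; ring. Qed.

Lemma sum_lt_S_sum_f_R0 n f : sum_lt (S n) f = sum_f_R0 f n.
Proof. induction n; simpl in *; [lra|]. rewrite <- IHn. reflexivity. Qed.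

Lemma sum_lt_prefix n ic D : (ic <= n)%nat ->
  sum_lt n (fun k => if Nat.ltb k ic then D k else 0) = sum_lt ic D.
Proof.
  induction n; intros H; [replace ic with O by lia; reflexivity|]. simpl.
  destruct (Nat.eq_dec ic (S n)) as [->|].
  - rewrite (proj2 (Nat.ltb_lt n (S n))), (sum_lt_ext n _ D); auto.
    intros k Hk. rewrite (proj2 (Nat.ltb_lt k (S n))); auto.
  - rewrite IHn, (proj2 (Nat.ltb_ge n ic)) by lia. ring.
Qed.

Lemma sum_lt_ge_term n h k : (forall l, (l < n)%nat -> 0 <= h l) -> (k < n)%nat ->
  h k <= sum_lt n h.
Proof.
  induction n; intros H0 Hk; [lia|]. simpl.
  assert (0 <= sum_lt n h) by (apply sum_lt_nonneg; auto).
  destruct (Nat.eq_dec k n) as [->|]; [lra|].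
  assert (0 <= h n) by (apply H0; lia).
  assert (h k <= sum_lt n h) by (apply IHn; auto; lia). lra.
Qed.

Lemma sum_lt_nonneg_eq0 n h : (forall k, (k < n)%nat -> 0 <= h k) -> sum_lt n h = 0 ->
  forall k, (k < n)%nat -> h k = 0.
Proof.
  intros H0 Hs k Hk. pose proof (sum_lt_ge_term n h k H0 Hk). pose proof (H0 k Hk). lra.
Qed.

Lemma rsum_sum_lt n f : rsum n f = sum_lt n (fun k => f (S k)).
Proof. induction n; simpl; [reflexivity|]. rewrite IHn. reflexivity. Qed.

Lemma rsum_ext n f g : (forall i, (1 <= i <= n)%nat -> f i = g i) -> rsum n f = rsum n g.
Proof. rewrite !rsum_sum_lt. intros H. apply sum_lt_ext. intros; apply H; lia. Qed.

Lemma rsum_plus n f g : rsum n (fun i => f i + g i) = rsum n f + rsum n g.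
Proof. rewrite !rsum_sum_lt. apply sum_lt_plus. Qed.

Lemma rsum_scal n a f : rsum n (fun i => a * f i) = a * rsum n f.
Proof. rewrite !rsum_sum_lt. apply sum_lt_scal. Qed.

Lemma rsum_const n a : rsum n (fun _ => a) = INR n * a.
Proof. rewrite rsum_sum_lt. apply sum_lt_const. Qed.

Lemma rsum_id n : rsum n INR = INR n * (INR n + 1) / 2.
Proof. induction n; cbn [rsum]; [simpl; lra|]. rewrite IHn, S_INR; field. Qed.

Lemma rsum_nonneg_eq0 n f : (forall i, (1 <= i <= n)%nat -> 0 <= f i) -> rsum n f = 0 ->
  forall i, (1 <= i <= n)%nat -> f i = 0.
Proof.
  rewrite rsum_sum_lt. intros H0 Hs i Hi.
  replace i with (S (i - 1)) by lia. apply (sum_lt_nonneg_eq0 n (fun k => f (S k))); auto; try lia.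
  intros; apply H0; lia.
Qed.

Lemma rsum_integer n f : (forall i, (1 <= i <= n)%nat -> exists z, f i = IZR z) ->
  exists z, rsum n f = IZR z.
Proof.
  induction n; intros H; [exists 0%Z; reflexivity|].
  destruct IHn as [z1 E1]; [intros; apply H; lia|]. destruct (H (S n)) as [z2 E2]; [lia|].
  exists (z1 + z2)%Z. simpl. rewrite E1, E2, plus_IZR. reflexivity.
Qed.

Lemma choice_on_range {A : Type} (a0 : A) d (P : nat -> A -> Prop) :
  (forall i, (1 <= i <= d)%nat -> exists x, P i x) ->
  exists f : nat -> A, forall i, (1 <= i <= d)%nat -> P i (f i).
Proof.
  intros H. apply (choice (fun i x => (1 <= i <= d)%nat -> P i x)). intros i.
  destruct (classic (1 <= i <= d)%nat) as [Hi|Hi].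
  - destruct (H i Hi) as [x Hx]. exists x; auto.
  - exists a0; tauto.
Qed.

Lemma count_idx_INR n p : INR (count_idx n p) = rsum n (fun i => if p i then 1 else 0).
Proof. induction n; simpl; auto. rewrite plus_INR, IHn. destruct (p (S n)); simpl; ring. Qed.

Lemma count_idx_ext n p1 p2 : (forall i, (1 <= i <= n)%nat -> p1 i = p2 i) ->
  count_idx n p1 = count_idx n p2.
Proof.
  induction n; simpl; intros H; auto.
  rewrite IHn, (H (S n)); auto; [lia|]. intros; apply H; lia.
Qed.

Lemma count_idx_pos n p : (1 <= count_idx n p)%nat -> exists i, (1 <= i <= n)%nat /\ p i = true.
Proof.
  induction n; simpl; intros H; [lia|]. destruct (p (S n)) eqn:E.
  - exists (S n); split; auto; lia.
  - destruct IHn as [i [Hi Hp]]; [lia|]. exists i; split; auto; lia.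
Qed.

Lemma count_idx_ge1 n p j : (1 <= j <= n)%nat -> p j = true -> (1 <= count_idx n p)%nat.
Proof.
  induction n; simpl; intros Hj Hp; [lia|]. destruct (Nat.eq_dec j (S n)) as [->|].
  - rewrite Hp. lia.
  - assert (1 <= count_idx n p)%nat by (apply IHn; auto; lia). lia.
Qed.

Lemma list_sum_map_plus (L : list R) (f g : R -> nat) :
  list_sum (map (fun q => f q + g q)%nat L) = (list_sum (map f L) + list_sum (map g L))%nat.
Proof. induction L; simpl; lia. Qed.

Lemma list_sum_b2n_unique (L : list R) (P : R -> bool) : NoDup L ->
  (forall q q', P q = true -> P q' = true -> q = q') ->
  list_sum (map (fun q => Nat.b2n (P q)) L) = Nat.b2n (existsb P L).
Proof.
  intros Hnd Hu. induction Hnd as [|a L Ha Hnd IH]; simpl; auto.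
  rewrite IH. destruct (P a) eqn:Ea; simpl; auto.
  assert (Hno : existsb P L = false).
  { apply Bool.not_true_iff_false. intros HL. apply existsb_exists in HL.
    destruct HL as [q [Hq Pq]]. rewrite (Hu q a Pq Ea) in Hq. contradiction. }
  rewrite Hno. reflexivity.
Qed.

Lemma count_idx_fibers n (L : list R) (P : R -> nat -> bool) : NoDup L ->
  (forall i q q', (1 <= i <= n)%nat -> P q i = true -> P q' i = true -> q = q') ->
  list_sum (map (fun q => count_idx n (P q)) L) = count_idx n (fun i => existsb (fun q => P q i) L).
Proof.
  intros Hnd. induction n; intros Hu; simpl.
  - clear Hnd. induction L; simpl; auto.
  - rewrite list_sum_map_plus, IHn by (intros; apply (Hu i); auto; lia). f_equal.
    apply (list_sum_b2n_unique L (fun q => P q (S n)) Hnd). intros; apply (Hu (S n)); auto; lia.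
Qed.

Lemma finite_family_list (P : nat -> R -> Prop) d :
  (forall i q q', (1 <= i <= d)%nat -> P i q -> P i q' -> q = q') ->
  exists L, NoDup L /\ forall q, In q L <-> exists i, (1 <= i <= d)%nat /\ P i q.
Proof.
  induction d as [|d IH]; intros Hu.
  - exists nil. split; [constructor|]. intros q; split; [intros []|intros [i [Hi _]]; lia].
  - destruct IH as [L [Hnd HL]]; [intros; apply (Hu i); auto; lia|].
    destruct (classic (exists q0, P (S d) q0 /\ ~ In q0 L)) as [[q0 [Hq0 Hin]]|Hno].
    + exists (q0 :: L). split; [constructor; auto|]. intros q; split.
      * intros [<-|H]; [exists (S d); split; auto; lia|].
        apply HL in H; destruct H as [i [Hi Hp]]; exists i; split; auto; lia.
      * intros [i [Hi Hp]]. destruct (Nat.eq_dec i (S d)) as [->|].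
        -- left; symmetry; exact (Hu _ _ _ Hi Hp Hq0).
        -- right; apply HL; exists i; split; auto; lia.
    + exists L. split; auto. intros q; split.
      * intros H; apply HL in H; destruct H as [i [Hi Hp]]; exists i; split; auto; lia.
      * intros [i [Hi Hp]]. destruct (Nat.eq_dec i (S d)) as [->|].
        -- apply NNPP; intros Hn; apply Hno; eauto.
        -- apply HL; exists i; split; auto; lia.
Qed.

Definition upward_closed (d : nat) (p : nat -> bool) : Prop :=
  forall j, (1 <= j < d)%nat -> p j = true -> p (S j) = true.

Lemma upward_closed_last d p j : upward_closed d p -> (1 <= j <= d)%nat -> p j = true -> p d = true.
Proof.
  intros Hup Hj Hpj.
  assert (H : forall k, (j + k <= d)%nat -> p (j + k)%nat = true).
  { induction k as [|k IH]; intros Hk; [rewrite Nat.add_0_r; auto|].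
    rewrite Nat.add_succ_r. apply Hup; [lia|]. apply IH; lia. }
  replace d with (j + (d - j))%nat by lia. apply H; lia.
Qed.

Lemma upward_closed_S d p : upward_closed (S d) p -> upward_closed d p.
Proof. intros Hup j Hj. apply Hup; lia. Qed.

Lemma upward_closed_false d p : upward_closed (S d) p -> p (S d) = false ->
  forall j, (1 <= j <= S d)%nat -> p j = false.
Proof.
  intros Hup E j Hj. apply Bool.not_true_iff_false. intros Hpj.
  rewrite (upward_closed_last (S d) p j Hup Hj Hpj) in E. discriminate.
Qed.

Lemma count_idx_false n p : (forall j, (1 <= j <= n)%nat -> p j = false) -> count_idx n p = O.
Proof. induction n; simpl; intros H; auto. rewrite H, IHn; auto; intros; try apply H; lia. Qed.

Lemma upward_closed_count d p : upward_closed d p -> forall j, (1 <= j <= d)%nat ->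
  (p j = true <-> (d + 1 <= j + count_idx d p)%nat).
Proof.
  induction d; intros Hup j Hj; [lia|]. simpl.
  destruct (p (S d)) eqn:E.
  - destruct (Nat.eq_dec j (S d)) as [->|]; [rewrite E; split; auto; lia|].
    rewrite (IHd (upward_closed_S d p Hup)) by lia. lia.
  - rewrite count_idx_false, (upward_closed_false d p Hup E j Hj)
      by (intros; apply (upward_closed_false d p Hup E); lia).
    split; [discriminate|lia].
Qed.

Lemma rsum_index_upward_closed d p : upward_closed d p ->
  rsum d (fun j => INR j * (if p j then 1 else 0)) =
  INR (count_idx d p) * INR d - INR (count_idx d p) * (INR (count_idx d p) - 1) / 2.
Proof.
  induction d; intros Hup; [simpl; lra|]. cbn [rsum count_idx].
  destruct (p (S d)) eqn:E.
  - rewrite IHd by exact (upward_closed_S d p Hup).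
    rewrite plus_INR, !S_INR. simpl INR. field.
  - rewrite count_idx_false by (intros; apply (upward_closed_false d p Hup E); lia).
    rewrite (rsum_ext d _ (fun _ => 0)), rsum_const; [simpl; field|].
    intros j Hj. rewrite (upward_closed_false d p Hup E) by lia. ring.
Qed.

Lemma rsum_pairs d (f : nat -> R) : (forall i, (1 <= i <= d)%nat -> f i = 0 \/ f i = 1) ->
  rsum d (fun i' => f i' * rsum (i' - 1) f) = rsum d f * (rsum d f - 1) / 2.
Proof.
  induction d; intros H01; [simpl; lra|]. cbn [rsum].
  rewrite IHd by (intros; apply H01; lia). replace (S d - 1)%nat with d by lia.
  destruct (H01 (S d) ltac:(lia)) as [E|E]; rewrite E; field.
Qed.

(* The pointwise form of the dimension formula: [f i] indicates [x] in the image of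
   [phi_i] and [p j] indicates [psi_j x > -oo]. *)
Lemma rsum_pairs_identity d (f : nat -> R) (p : nat -> bool) :
  (forall i, (1 <= i <= d)%nat -> f i = 0 \/ f i = 1) -> upward_closed d p ->
  rsum d f = INR (count_idx d p) ->
  rsum d (fun i' => rsum (i' - 1) (fun i => f i' * (1 - f i))) =
  rsum d (fun i => (INR i - 1 - INR d) * f i) + rsum d (fun j => INR j * (if p j then 1 else 0)).
Proof.
  intros Hf Hup Hsum.
  rewrite (rsum_ext d _ (fun i' => (INR i' - 1) * f i' + -1 * (f i' * rsum (i' - 1) f))).
  2:{ intros i' Hi'.
      rewrite (rsum_ext (i' - 1) _ (fun i => f i' + -1 * (f i' * f i))) by (intros; ring).
      rewrite rsum_plus, rsum_const, !rsum_scal, minus_INR by lia. simpl INR. ring. }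
  rewrite rsum_plus, rsum_scal, rsum_pairs, rsum_index_upward_closed, Hsum by auto.
  rewrite (rsum_ext d (fun i => (INR i - 1 - INR d) * f i)
                     (fun i => (INR i - 1) * f i + - INR d * f i))
    by (intros; ring).
  rewrite rsum_plus, rsum_scal, Hsum. field.
Qed.

Ltac destruct_min_max := unfold Rmax, Rmin in *; repeat match goal with
  | |- context [Rle_dec ?a ?b] => destruct (Rle_dec a b)
  | H: context [Rle_dec ?a ?b] |- _ => destruct (Rle_dec a b)
  end.

Definition strict_grid (g : nat -> R) (n : nat) : Prop := forall k, (k < n)%nat -> g k < g (S k).

Lemma grid_lt g n i j : strict_grid g n -> (i < j <= n)%nat -> g i < g j.
Proof.
  intros Hg [Hij Hjn]. induction j; [lia|].
  destruct (Nat.eq_dec i j) as [->|]; [apply Hg; lia|].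
  apply Rlt_trans with (g j); [apply IHj; lia|apply Hg; lia].
Qed.

Lemma grid_le_iff g n i j : strict_grid g n -> (i <= n)%nat -> (j <= n)%nat ->
  (g i <= g j <-> (i <= j)%nat).
Proof.
  intros Hg Hi Hj. split; intro H.
  - destruct (le_lt_dec i j); auto. assert (g j < g i) by (apply (grid_lt g n); auto; lia). lra.
  - destruct (Nat.eq_dec i j) as [->|]; [lra|]. left; apply (grid_lt g n); auto; lia.
Qed.

Lemma grid_lt_iff g n i j : strict_grid g n -> (i <= n)%nat -> (j <= n)%nat ->
  (g i < g j <-> (i < j)%nat).
Proof.
  intros Hg Hi Hj. split; intro H.
  - destruct (le_lt_dec j i) as [Hji|]; auto. apply (grid_le_iff g n) in Hji; auto. lra.
  - apply (grid_lt g n); auto; lia.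
Qed.

Lemma grid_cell g n x : strict_grid g n -> g O <= x < g n ->
  exists k, (k < n)%nat /\ g k <= x < g (S k).
Proof.
  induction n; intros Hg Hx; [lra|].
  destruct (Rlt_dec x (g n)).
  - destruct IHn as [k [Hk Hk2]]; [intros k Hk; apply Hg; lia|lra|]. exists k; split; auto; lia.
  - exists n; split; [lia|lra].
Qed.

Lemma least_nat (P : nat -> Prop) n : P n ->
  exists K, (K <= n)%nat /\ P K /\ forall k, (k < K)%nat -> ~ P k.
Proof.
  induction n as [n IH] using (well_founded_induction lt_wf). intros Hn.
  destruct (classic (exists k, (k < n)%nat /\ P k)) as [[k [Hk Pk]]|Hno].
  - destruct (IH k Hk Pk) as [K [HK1 [HK2 HK3]]]. exists K; repeat split; auto; lia.
  - exists n; repeat split; auto. intros k Hk Pk; apply Hno; eauto.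
Qed.

Lemma grid_threshold g n (P : R -> bool) : strict_grid g n ->
  (forall x y, x <= y -> P x = true -> P y = true) ->
  (forall k x, (k < n)%nat -> g k <= x < g (S k) -> P x = P (g k)) ->
  (forall x, x < g O -> P x = false) -> P (g n) = true ->
  exists K, (K <= n)%nat /\ forall x, P x = true <-> g K <= x.
Proof.
  intros Hg Hmono Hcell Hlow Htop.
  destruct (least_nat (fun k => P (g k) = true) n Htop) as [K [HKn [HK HKmin]]].
  exists K. split; auto. intros x. split; intros Hx.
  - destruct (Rlt_dec x (g O)) as [Hlt|]; [rewrite Hlow in Hx; auto; discriminate|].
    destruct (Rle_dec (g n) x).
    + apply Rle_trans with (g n); auto. apply (grid_le_iff g n); auto.
    + destruct (grid_cell g n x Hg) as [k [Hk Hxk]]; [lra|].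
      rewrite (Hcell k x Hk Hxk) in Hx. destruct (le_lt_dec K k).
      * apply Rle_trans with (g k); [apply (grid_le_iff g n); auto; lia|lra].
      * exfalso; apply (HKmin k); auto.
  - exact (Hmono (g K) x Hx HK).
Qed.

Definition on_grid (g : nat -> R) (n : nat) (p : R) : Prop := exists j, (j <= n)%nat /\ g j = p.

Lemma grid_insert g n p : strict_grid g n -> ~ on_grid g n p ->
  exists pos, (pos <= S n)%nat /\ forall k, (k <= n)%nat ->
    ((k < pos)%nat -> g k < p) /\ ((pos <= k)%nat -> p < g k).
Proof.
  intros Hg Hp.
  assert (Hne : forall k, (k <= n)%nat -> g k <> p) by (intros k Hk E; apply Hp; exists k; auto).
  destruct (Rlt_dec p (g O)); [|destruct (Rlt_dec p (g n))].
  - exists O. split; [lia|]. intros k Hk. split; [lia|]. intros _.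
    destruct (Nat.eq_dec k O) as [->|]; auto. pose proof (grid_lt g n O k Hg ltac:(lia)). lra.
  - destruct (grid_cell g n p Hg) as [k [Hk Hk2]]; [lra|].
    assert (g k <> p) by (apply Hne; lia).
    exists (S k). split; [lia|]. intros j Hj. split; intro Hjk.
    + destruct (Nat.eq_dec j k) as [->|]; [lra|]. pose proof (grid_lt g n j k Hg ltac:(lia)); lra.
    + destruct (Nat.eq_dec j (S k)) as [->|]; [lra|].
      pose proof (grid_lt g n (S k) j Hg ltac:(lia)); lra.
  - exists (S n). split; [lia|]. intros k Hk. split; [|lia]. intros _.
    specialize (Hne n (le_n n)). destruct (Nat.eq_dec k n) as [->|]; [lra|].
    pose proof (grid_lt g n k n Hg ltac:(lia)). lra.
Qed.

Lemma grid_exists (P : list R) : exists n g, strict_grid g n /\ forall p, In p P -> on_grid g n p.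
Proof.
  induction P as [|p P [n [g [Hg Hc]]]].
  - exists O, (fun _ => 0). split; [intros k Hk; lia|]. intros p [].
  - destruct (classic (on_grid g n p)) as [Hon|Hoff].
    { exists n, g. split; auto. intros p0 [<-|Hin]; auto. }
    destruct (grid_insert g n p Hg Hoff) as [pos [Hpos Hp]].
    exists (S n),
      (fun k => if Nat.ltb k pos then g k else if Nat.eqb k pos then p else g (k - 1)%nat).
    split.
    + intros k Hk. destruct (Nat.ltb_spec k pos), (Nat.ltb_spec (S k) pos).
      * apply Hg; lia.
      * destruct (Nat.eqb_spec (S k) pos); [apply Hp; lia|lia].
      * lia.
      * destruct (Nat.eqb_spec k pos), (Nat.eqb_spec (S k) pos); try lia.
        -- subst. replace (S pos - 1)%nat with pos by lia. apply Hp; lia.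
        -- replace (S k - 1)%nat with (S (k - 1)) by lia. apply Hg; lia.
    + intros p0 [<-|Hin].
      * exists pos. split; [lia|]. rewrite (proj2 (Nat.ltb_ge pos pos)), Nat.eqb_refl; auto.
      * destruct (Hc p0 Hin) as [k [Hk <-]]. destruct (Nat.ltb_spec k pos).
        -- exists k. split; [lia|]. rewrite (proj2 (Nat.ltb_lt k pos)); auto.
        -- exists (S k). split; [lia|].
           rewrite (proj2 (Nat.ltb_ge (S k) pos)), (proj2 (Nat.eqb_neq (S k) pos)) by lia.
           f_equal; lia.
Qed.

(* Riemann--Stieltjes sum of [F] against [G] on the grid; exact for step functions [F]. *)
Definition grid_integral (g : nat -> R) (n : nat) (G F : R -> R) : R :=
  sum_lt n (fun k => F (g k) * (G (g (S k)) - G (g k))).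

Definition overlap (u w a c : R) : R := Rmax 0 (Rmin c w - Rmax a u).

Lemma overlap_nonneg u w a c : 0 <= overlap u w a c.
Proof. unfold overlap; destruct_min_max; lra. Qed.

Lemma finite_cover_length (a c : nat -> R) N : forall u w,
  (forall x, u <= x <= w -> exists k, (k < N)%nat /\ a k < x < c k) ->
  w - u <= sum_lt N (fun k => overlap u w (a k) (c k)).
Proof.
  induction N; intros u w H; simpl.
  - destruct (Rle_dec u w); [|lra]. destruct (H u) as [k [Hk _]]; [lra|lia].
  - pose proof (overlap_nonneg u w (a N) (c N)).
    assert (Hcov : forall u' w', u <= u' -> w' <= w ->
        (forall x, u' <= x <= w' -> ~ a N < x < c N) ->
        w' - u' <= sum_lt N (fun k => overlap u' w' (a k) (c k))).
    { intros u' w' Hu Hw Hout. apply IHN. intros x Hx. destruct (H x) as [k [Hk Hxk]]; [lra|].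
      destruct (Nat.eq_dec k N) as [->|]; [exfalso; apply (Hout x); auto|].
      exists k; split; [lia|auto]. }
    destruct (Rle_dec (c N) (a N)) as [Hca|Hca%Rnot_le_lt].
    + assert (w - u <= sum_lt N (fun k => overlap u w (a k) (c k)))
        by (apply Hcov; intros; lra). lra.
    + (* Remove the [N]-th interval: what remains of [[u, w]] is covered by the others. *)
      set (a' := Rmin (a N) w). set (c' := Rmax (c N) u).
      set (S1 := sum_lt N (fun k => overlap u a' (a k) (c k))).
      set (S2 := sum_lt N (fun k => overlap c' w (a k) (c k))).
      assert (Hnn : 0 <= S1 /\ 0 <= S2)
        by (split; apply sum_lt_nonneg; intros; apply overlap_nonneg).
      assert (H1 : a' - u <= S1).
      { destruct (Rle_dec u a'); [|lra]. apply Hcov; unfold a'; intros; destruct_min_max; lra. }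
      assert (H2 : w - c' <= S2).
      { destruct (Rle_dec c' w); [|lra]. apply Hcov; unfold c'; intros; destruct_min_max; lra. }
      assert (H3 : S1 + S2 <= sum_lt N (fun k => overlap u w (a k) (c k))).
      { unfold S1, S2. rewrite <- sum_lt_plus. apply sum_lt_le. intros.
        unfold overlap, a', c'; destruct_min_max; lra. }
      assert (Rmin (c N) w - Rmax (a N) u <= overlap u w (a N) (c N))
        by (unfold overlap; destruct_min_max; lra).
      assert (Ea : a' = Rmin (a N) w) by reflexivity.
      assert (Ec : c' = Rmax (c N) u) by reflexivity.
      clearbody a' c' S1 S2. destruct_min_max; lra.
Qed.

Lemma list_nat_bound (l : list R) : exists N, forall k, In (INR k) l -> (k < N)%nat.
Proof.
  induction l as [|y l [N HN]].
  - exists O; intros k [].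
  - destruct (classic (exists k, y = INR k)) as [[k ->]|Hy].
    + exists (Nat.max N (S k)). intros k' [E%INR_eq|Hin]; [lia|]. specialize (HN k' Hin); lia.
    + exists N. intros k [E|Hin]; [exfalso; eauto|auto].
Qed.

Lemma compact_finite_subcover (a c : nat -> R) (u w : R) :
  (forall x, u <= x <= w -> exists k, a k < x < c k) ->
  exists N, forall x, u <= x <= w -> exists k, (k < N)%nat /\ a k < x < c k.
Proof.
  intros H.
  set (fam := fun y x => exists k, y = INR k /\ a k < x < c k).
  assert (cf : forall y, (exists x, fam y x) -> (fun y => exists k, y = INR k) y)
    by (intros y [x [k [Hk _]]]; exists k; auto).
  destruct (compact_P3 u w (mkfamily (fun y => exists k, y = INR k) fam cf)) as [D [Hcov [l Hl]]].
  - split.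
    + intros x Hx. destruct (H x Hx) as [k Hk]. exists (INR k), k; auto.
    + intros y x [k [Hy Hx]].
      assert (Hd : 0 < Rmin (x - a k) (c k - x)) by (destruct_min_max; lra).
      exists (mkposreal _ Hd). intros z Hz. unfold disc in Hz; simpl in Hz.
      exists k. split; auto. apply Rabs_def2 in Hz. destruct_min_max; lra.
  - destruct (list_nat_bound l) as [N HN]. exists N. intros x Hx.
    destruct (Hcov x Hx) as [y [[k [-> Hk]] HD]]. exists k. split; auto.
    apply HN, Hl. split; auto. exists k; auto.
Qed.

Lemma finite_subcover_uniform (a c u w : nat -> R) (P : nat -> Prop) n :
  (forall k, (k < n)%nat -> P k -> exists N, forall x, u k <= x <= w k ->
     exists l, (l < N)%nat /\ a l < x < c l) ->
  exists N, forall k, (k < n)%nat -> P k -> forall x, u k <= x <= w k ->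
     exists l, (l < N)%nat /\ a l < x < c l.
Proof.
  induction n as [|n IH]; intros H; [exists O; intros; lia|].
  destruct IH as [N1 HN1]; [intros; apply H; auto; lia|].
  destruct (classic (P n)) as [Pn|Pn].
  - destruct (H n ltac:(lia) Pn) as [N2 HN2]. exists (Nat.max N1 N2). intros k Hk Pk x Hx.
    destruct (Nat.eq_dec k n) as [->|].
    + destruct (HN2 x Hx) as [l [Hl Hxl]]. exists l; split; auto; lia.
    + destruct (HN1 k ltac:(lia) Pk x Hx) as [l [Hl Hxl]]. exists l; split; auto; lia.
  - exists N1. intros k Hk Pk x Hx. destruct (Nat.eq_dec k n) as [->|]; [contradiction|].
    apply (HN1 k); auto; lia.
Qed.

Lemma sum_overlap_cells (g w act : nat -> R) (a c : R) n :
  (forall k, (k < n)%nat -> g k <= w k <= g (S k)) ->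
  (forall k, (k < n)%nat -> 0 <= act k <= 1) ->
  sum_lt n (fun k => act k * overlap (g k) (w k) a c) <= Rmax 0 (Rmin c (g n) - a).
Proof.
  induction n; intros Hw Ha; simpl; [destruct_min_max; lra|].
  assert (IH : sum_lt n (fun k => act k * overlap (g k) (w k) a c) <= Rmax 0 (Rmin c (g n) - a))
    by (apply IHn; intros; [apply Hw|apply Ha]; lia).
  pose proof (Hw n ltac:(lia)). pose proof (Ha n ltac:(lia)).
  pose proof (overlap_nonneg (g n) (w n) a c).
  assert (act n * overlap (g n) (w n) a c <= overlap (g n) (w n) a c) by nra.
  unfold overlap in *; destruct_min_max; lra.
Qed.

Lemma sum_lt_le_infinite_sum (h : nat -> R) (s : R) N :
  (forall k, 0 <= h k) -> infinite_sum h s -> sum_lt N h <= s.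
Proof.
  intros Hp Hs.
  assert (G : forall n, sum_f_R0 h n <= s).
  { apply growing_ineq; [|exact Hs]. intro n; simpl. pose proof (Hp (S n)); lra. }
  destruct N; [simpl; pose proof (G O); pose proof (Hp O); simpl in *; lra|].
  rewrite sum_lt_S_sum_f_R0. apply G.
Qed.

Lemma infinite_sum_sum_lt (h : nat -> R) n : (forall k, (n <= k)%nat -> h k = 0) ->
  infinite_sum h (sum_lt n h).
Proof.
  intros Hz eps He. exists n. intros m Hm. rewrite <- sum_lt_S_sum_f_R0.
  replace (sum_lt (S m) h) with (sum_lt n h); [unfold Rdist; rewrite Rminus_diag, Rabs_R0; lra|].
  induction Hm; simpl; [rewrite Hz; auto; lra|].
  simpl in IHHm. rewrite IHHm, (Hz (S m)); [ring|lia].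
Qed.

Section GridStepMeasure.

Variables (g : nat -> R) (n : nat) (A : R -> Prop) (a : R -> R).
Hypothesis Hg : strict_grid g n.
Hypothesis HA : forall x, A x <-> a x = 1.
Hypothesis Ha01 : forall x, a x = 0 \/ a x = 1.
Hypothesis Hsupp : forall x, A x -> g O <= x < g n.
Hypothesis Hcell : forall k x, (k < n)%nat -> g k <= x < g (S k) -> a x = a (g k).

Lemma grid_step_le_cover (an cn : nat -> R) s :
  (forall l, an l <= cn l) -> (forall x, A x -> exists l, an l < x < cn l) ->
  infinite_sum (fun l => cn l - an l) s -> grid_integral g n (fun x => x) a <= s.
Proof.
  intros Hac Hcov Hsum. apply Rle_plus_epsilon. intros eps Heps.
  pose proof (pos_INR n).
  set (delta := eps / (INR n + 1)).
  assert (Hdelta : 0 < delta) by (apply Rdiv_lt_0_compat; lra).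
  assert (Hn_delta : INR n * delta <= eps).
  { apply Rle_trans with ((INR n + 1) * delta); [nra|]. right; unfold delta; field; lra. }
  (* Shrink each cell of [A] to a compact interval [[g k, w k]], covered by finitely many [l]. *)
  set (w := fun k => Rmax (g k) (g (S k) - delta)).
  assert (Hw : forall k, (k < n)%nat -> g k <= w k <= g (S k)).
  { intros k Hk. specialize (Hg k Hk). unfold w; destruct_min_max; lra. }
  destruct (finite_subcover_uniform an cn g w (fun k => a (g k) = 1) n) as [N HN].
  { intros k Hk Hak. apply compact_finite_subcover. intros x Hx. apply Hcov, HA.
    rewrite (Hcell k x Hk); auto. specialize (Hw k Hk). specialize (Hg k Hk).
    unfold w in *; destruct_min_max; lra. }
  assert (E1 : grid_integral g n (fun x => x) a - INR n * delta <=
               sum_lt n (fun k => a (g k) * (w k - g k))).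
  { unfold grid_integral. rewrite <- sum_lt_const, <- sum_lt_minus.
    apply sum_lt_le. intros k Hk. specialize (Hg k Hk).
    destruct (Ha01 (g k)) as [E|E]; rewrite E; unfold w; destruct_min_max; lra. }
  assert (E2 : sum_lt n (fun k => a (g k) * (w k - g k)) <=
               sum_lt n (fun k => sum_lt N (fun l => a (g k) * overlap (g k) (w k) (an l) (cn l)))).
  { apply sum_lt_le. intros k Hk. rewrite sum_lt_scal.
    destruct (Ha01 (g k)) as [E|E]; rewrite E; [lra|].
    apply Rmult_le_compat_l; [lra|]. apply finite_cover_length. apply HN; auto. }
  assert (E3 : sum_lt n (fun k => sum_lt N (fun l => a (g k) * overlap (g k) (w k) (an l) (cn l)))
               <= sum_lt N (fun l => cn l - an l)).
  { rewrite sum_lt_swap. apply sum_lt_le. intros l Hl.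
    eapply Rle_trans; [apply (sum_overlap_cells g w (fun k => a (g k)))|].
    - exact Hw.
    - intros k Hk; destruct (Ha01 (g k)) as [E|E]; rewrite E; lra.
    - specialize (Hac l). destruct_min_max; lra. }
  assert (E4 : sum_lt N (fun l => cn l - an l) <= s).
  { apply sum_lt_le_infinite_sum; auto. intro l; specialize (Hac l); lra. }
  lra.
Qed.

Lemma grid_step_cover eps : 0 < eps -> exists an cn : nat -> R,
  (forall l, an l <= cn l) /\ (forall x, A x -> exists l, an l < x < cn l) /\
  infinite_sum (fun l => cn l - an l) (sum_lt n (fun l => cn l - an l)) /\
  sum_lt n (fun l => cn l - an l) <= grid_integral g n (fun x => x) a + eps.
Proof.
  intros Heps. pose proof (pos_INR n).
  set (e := eps / (INR n + 1)).
  assert (He : 0 < e) by (apply Rdiv_lt_0_compat; lra).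
  (* The active cell [[g k, g (S k))] is enlarged to the open interval [(g k - e, g (S k))]. *)
  exists (fun l => if Nat.ltb l n then g l - a (g l) * e else 0),
         (fun l => if Nat.ltb l n then g l + a (g l) * (g (S l) - g l) else 0).
  split; [|split; [|split]].
  - intro l. destruct (Nat.ltb_spec l n) as [Hl|]; [|lra]. specialize (Hg l Hl).
    destruct (Ha01 (g l)) as [E|E]; rewrite E; lra.
  - intros x Hx. destruct (grid_cell g n x Hg (Hsupp x Hx)) as [k [Hk Hxk]]. exists k.
    destruct (Nat.ltb_spec k n); [|lia].
    assert (E : a (g k) = 1) by (rewrite <- (Hcell k x Hk Hxk); apply HA; auto).
    rewrite E. lra.
  - apply infinite_sum_sum_lt. intros l Hl. destruct (Nat.ltb_spec l n); [lia|lra].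
  - rewrite (sum_lt_ext n _ (fun k => a (g k) * (g (S k) - g k) + e * a (g k))).
    2:{ intros k Hk. destruct (Nat.ltb_spec k n); [ring|lia]. }
    rewrite sum_lt_plus, sum_lt_scal. fold (grid_integral g n (fun x => x) a).
    assert (0 <= sum_lt n (fun k => a (g k)) <= INR n).
    { rewrite <- (Rmult_1_r (INR n)), <- sum_lt_const.
      split; [apply sum_lt_nonneg|apply sum_lt_le]; intros k _;
        destruct (Ha01 (g k)) as [E|E]; rewrite E; lra. }
    assert (e * INR n <= eps).
    { apply Rle_trans with (e * (INR n + 1)); [nra|]. right; unfold e; field; lra. }
    nra.
Qed.

Lemma is_Leb_grid_step : is_Leb A (grid_integral g n (fun x => x) a).
Proof.
  split.
  - intros s [an [cn [Hac [Hcov Hsum]]]]. exact (grid_step_le_cover an cn s Hac Hcov Hsum).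
  - intros m' Hm'. apply Rle_plus_epsilon. intros eps Heps.
    destruct (grid_step_cover eps Heps) as [an [cn [Hac [Hcov [Hsum Hle]]]]].
    apply Rle_trans with (sum_lt n (fun l => cn l - an l)); auto.
    apply Hm'. exists an, cn. auto.
Qed.

End GridStepMeasure.

Definition ind_Ico (s e x : R) : R := if Rle_dec s x then if Rlt_dec x e then 1 else 0 else 0.
Definition ind_Ici (s x : R) : R := if Rle_dec s x then 1 else 0.

Lemma ind_Ico_01 s e x : ind_Ico s e x = 0 \/ ind_Ico s e x = 1.
Proof. unfold ind_Ico; destruct Rle_dec; try destruct Rlt_dec; auto. Qed.

Lemma ind_Ici_01 s x : ind_Ici s x = 0 \/ ind_Ici s x = 1.
Proof. unfold ind_Ici; destruct Rle_dec; auto. Qed.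

Section GridIntegral.

Variables (g : nat -> R) (n : nat).

Lemma grid_integral_ext G F1 F2 : (forall k, (k < n)%nat -> F1 (g k) = F2 (g k)) ->
  grid_integral g n G F1 = grid_integral g n G F2.
Proof. intros H; apply sum_lt_ext; intros k Hk; rewrite H; auto. Qed.

Lemma grid_integral_plus G F1 F2 :
  grid_integral g n G (fun x => F1 x + F2 x) = grid_integral g n G F1 + grid_integral g n G F2.
Proof. unfold grid_integral. rewrite <- sum_lt_plus. apply sum_lt_ext; intros; ring. Qed.

Lemma grid_integral_scal G a F :
  grid_integral g n G (fun x => a * F x) = a * grid_integral g n G F.
Proof. unfold grid_integral. rewrite <- sum_lt_scal. apply sum_lt_ext; intros; ring. Qed.

Lemma grid_integral_zero G : grid_integral g n G (fun _ => 0) = 0.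
Proof. unfold grid_integral. rewrite (sum_lt_ext n _ (fun _ => 0)), sum_lt_const; intros; ring. Qed.

Lemma grid_integral_rsum G m (F : nat -> R -> R) :
  grid_integral g n G (fun x => rsum m (fun i => F i x)) =
  rsum m (fun i => grid_integral g n G (F i)).
Proof. induction m; simpl; [apply grid_integral_zero|]. rewrite grid_integral_plus, IHm; auto. Qed.

Lemma grid_integral_sum_lt G m (F : nat -> R -> R) :
  grid_integral g n G (fun x => sum_lt m (fun i => F i x)) =
  sum_lt m (fun i => grid_integral g n G (F i)).
Proof. induction m; simpl; [apply grid_integral_zero|]. rewrite grid_integral_plus, IHm; auto. Qed.

Hypothesis Hg : strict_grid g n.

Lemma grid_integral_ind_Ico G ia ic : (ia <= ic <= n)%nat ->
  grid_integral g n G (ind_Ico (g ia) (g ic)) = G (g ic) - G (g ia).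
Proof.
  intros H. unfold grid_integral.
  rewrite (sum_lt_ext n _ (fun k => (if Nat.ltb k ic then G (g (S k)) - G (g k) else 0) -
                                    (if Nat.ltb k ia then G (g (S k)) - G (g k) else 0))).
  - rewrite sum_lt_minus, !sum_lt_prefix, !(sum_lt_telescope (fun k => G (g k))) by lia. ring.
  - intros k Hk. unfold ind_Ico.
    assert (E1 : g ia <= g k <-> (ia <= k)%nat) by (apply (grid_le_iff g n); auto; lia).
    assert (E2 : g k < g ic <-> (k < ic)%nat) by (apply (grid_lt_iff g n); auto; lia).
    destruct (Rle_dec (g ia) (g k)) as [L1|L1], (Rlt_dec (g k) (g ic)) as [L2|L2],
      (Nat.ltb_spec k ic), (Nat.ltb_spec k ia); rewrite ?E1, ?E2 in *; try ring; lia.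
Qed.

Lemma grid_integral_ind_Ici G ia : (ia <= n)%nat ->
  grid_integral g n G (ind_Ici (g ia)) = G (g n) - G (g ia).
Proof.
  intros H. rewrite <- (grid_integral_ind_Ico G ia n) by lia. apply grid_integral_ext.
  intros k Hk. unfold ind_Ici, ind_Ico. destruct Rle_dec; auto. destruct Rlt_dec as [|E]; auto.
  exfalso. apply E, (grid_lt_iff g n _ _ Hg); lia.
Qed.

Lemma on_grid_cell_cmp k x p : (k < n)%nat -> g k <= x < g (S k) -> on_grid g n p ->
  (p <= x <-> p <= g k) /\ (x < p <-> g k < p).
Proof.
  intros Hk Hx [j [Hj <-]]. destruct (le_lt_dec j k).
  - assert (g j <= g k) by (apply (grid_le_iff g n _ _ Hg); auto; lia). split; split; intro; lra.
  - assert (g (S k) <= g j) by (apply (grid_le_iff g n _ _ Hg); auto; lia).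
    assert (g k < g (S k)) by (apply Hg; auto). split; split; intro; lra.
Qed.

Lemma ind_Ico_cell k x s e : (k < n)%nat -> g k <= x < g (S k) -> on_grid g n s -> on_grid g n e ->
  ind_Ico s e x = ind_Ico s e (g k).
Proof.
  intros Hk Hx Hs He.
  destruct (on_grid_cell_cmp k x s Hk Hx Hs) as [A1 _], (on_grid_cell_cmp k x e Hk Hx He) as [_ B2].
  unfold ind_Ico. destruct (Rle_dec s x), (Rle_dec s (g k)); try tauto.
  destruct (Rlt_dec x e), (Rlt_dec (g k) e); tauto.
Qed.

Lemma ind_Ici_cell k x s : (k < n)%nat -> g k <= x < g (S k) -> on_grid g n s ->
  ind_Ici s x = ind_Ici s (g k).
Proof.
  intros Hk Hx Hs. destruct (on_grid_cell_cmp k x s Hk Hx Hs) as [A1 _].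
  unfold ind_Ici. destruct (Rle_dec s x), (Rle_dec s (g k)); tauto.
Qed.

End GridIntegral.

Record affine_pieces (bb : R) (f : R -> ER) (q : R) (m : nat) (t c : nat -> R) : Prop := {
  pieces_start : t O = q;
  pieces_grid : strict_grid t m;
  pieces_below : forall x, x < q -> f x = None;
  pieces_mid : forall k x, (k < m)%nat -> t k <= x < t (S k) -> f x = Some (bb * x + c k);
  pieces_last : forall x, t m <= x -> f x = Some (bb * x + c m) }.

Lemma right_cont_affine_value (bb : R) (f : R -> ER) (x0 v c0 e0 : R) :
  0 < bb -> right_cont f -> f x0 = Some v -> 0 < e0 ->
  (forall x, x0 < x < x0 + e0 -> f x = Some (bb * x + c0)) -> v = bb * x0 + c0.
Proof.
  intros Hb Hrc Hv He0 Hx. apply NNPP. intros Hne.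
  set (eps := Rabs (v - (bb * x0 + c0)) / 2).
  assert (Heps : 0 < eps) by (apply Rdiv_lt_0_compat; [apply Rabs_pos_lt; lra|lra]).
  specialize (Hrc x0). rewrite Hv in Hrc. destruct (Hrc eps Heps) as [delta [Hd Hy]].
  set (h := Rmin delta (Rmin e0 (eps / bb)) / 2).
  assert (Hep : 0 < eps / bb) by (apply Rdiv_lt_0_compat; lra).
  assert (Hh : 0 < h < delta /\ h < e0 /\ h <= eps / bb / 2)
    by (unfold h; destruct_min_max; lra).
  assert (Hbh : bb * h <= eps / 2).
  { apply Rle_trans with (bb * (eps / bb / 2)); [apply Rmult_le_compat_l; lra|].
    right; field; lra. }
  destruct (Hy (x0 + h)) as [w [Hw1 Hw2]]; [lra|].
  rewrite Hx in Hw1 by lra. injection Hw1 as <-.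
  assert (Ea : Rabs (v - (bb * x0 + c0)) = 2 * eps) by (unfold eps; field).
  clearbody eps h. apply Rabs_def2 in Hw2.
  assert (0 < bb * h) by (apply Rmult_lt_0_compat; lra).
  destruct (Rle_dec 0 (v - (bb * x0 + c0)));
    [rewrite Rabs_right in Ea by lra|rewrite Rabs_left in Ea by lra]; nra.
Qed.

Lemma affine_pieces_of_cond3 (bn : nat) (f : R -> ER) (q : R) :
  (1 <= bn)%nat -> cond3 bn f q -> right_cont f ->
  exists m t c, affine_pieces (INR bn) f q m t c /\ c m = - q.
Proof.
  intros Hbn [Hdom [[m [t [c [Ht0 [Hst [Hin Hlast]]]]]] [T HT]]] Hrc.
  assert (Hb : 0 < INR bn) by (apply lt_0_INR; lia).
  assert (Hval : forall k, (k <= m)%nat -> f (t k) = Some (INR bn * t k + c k)).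
  { intros k Hk. destruct (f (t k)) as [v|] eqn:E.
    - f_equal. apply (right_cont_affine_value (INR bn) f (t k) v (c k)
                        (if Nat.ltb k m then t (S k) - t k else 1)); auto.
      + destruct (Nat.ltb_spec k m) as [Hkm|]; [specialize (Hst k Hkm)|]; lra.
      + destruct (Nat.ltb_spec k m); intros x Hx; [apply Hin; auto; lra|].
        assert (k = m) as -> by lia. apply Hlast; lra.
    - exfalso. apply (proj2 (Hdom (t k))); auto. rewrite <- Ht0.
      destruct k; [lra|]. left; apply (grid_lt t m); auto; lia. }
  exists m, t, c. split; [split; auto|].
  - intros x Hx. destruct (f x) eqn:E; auto. assert (q <= x) by (apply Hdom; congruence). lra.
  - intros k x Hk Hx. destruct (Req_dec x (t k)) as [->|]; [apply Hval; lia|]. apply Hin; auto; lra.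
  - intros x Hx. destruct (Req_dec x (t m)) as [->|]; [apply Hval; lia|]. apply Hlast; lra.
  - set (x := Rmax T (t m + 1)). assert (T <= x /\ t m < x) by (unfold x; destruct_min_max; lra).
    specialize (HT x (proj1 H)). rewrite Hlast in HT by lra. injection HT. lra.
Qed.

Lemma not_cont_at_jump bb f q m t c k : 0 < bb -> affine_pieces bb f q m t c ->
  (k < m)%nat -> c k <> c (S k) -> ~ cont_at f (t (S k)).
Proof.
  intros Hb [Ht0 Hst Hnone Hin Hlast] Hk Hc Hcont.
  pose proof (Hst k Hk) as Htk.
  assert (Hf1 : f (t (S k)) = Some (bb * t (S k) + c (S k))).
  { destruct (Nat.eq_dec (S k) m) as [<-|]; [apply Hlast; lra|].
    apply Hin; [lia|]. pose proof (Hst (S k) ltac:(lia)). lra. }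
  unfold cont_at in Hcont. rewrite Hf1 in Hcont.
  set (eps := Rabs (c k - c (S k)) / 2).
  assert (Heps : 0 < eps) by (apply Rdiv_lt_0_compat; [apply Rabs_pos_lt; lra|lra]).
  destruct (Hcont eps Heps) as [delta [Hd Hy]].
  assert (Hep : 0 < eps / bb) by (apply Rdiv_lt_0_compat; lra).
  set (h := Rmin delta (Rmin (t (S k) - t k) (eps / bb)) / 2).
  assert (Hh : 0 < h < delta /\ h < t (S k) - t k /\ h <= eps / bb / 2)
    by (unfold h; destruct_min_max; lra).
  assert (Hbh : bb * h <= eps / 2).
  { apply Rle_trans with (bb * (eps / bb / 2)); [apply Rmult_le_compat_l; lra|].
    right; field; lra. }
  destruct (Hy (t (S k) - h)) as [w [Hw1 Hw2]].
  { replace (t (S k) - h - t (S k)) with (- h) by ring. rewrite Rabs_Ropp, Rabs_right; lra. }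
  rewrite (Hin k) in Hw1 by (auto; lra). injection Hw1 as <-.
  apply Rabs_def2 in Hw2. assert (0 < bb * h) by (apply Rmult_lt_0_compat; lra).
  assert (Ea : Rabs (c k - c (S k)) = 2 * eps) by (unfold eps; field).
  clearbody eps h.
  destruct (Rle_dec 0 (c k - c (S k)));
    [rewrite Rabs_right in Ea by lra|rewrite Rabs_left in Ea by lra]; nra.
Qed.

Definition piece_start (bb : R) (t c : nat -> R) (k : nat) : R := bb * t k + c k.
Definition piece_end (bb : R) (t c : nat -> R) (k : nat) : R := bb * t (S k) + c k.

(* The image of a function with affine pieces [t, c] is the union of the intervals
   [[piece_start k, piece_end k)], [k < m], and [[piece_start m, +oo)]. *)
Definition image_ind (bb : R) (m : nat) (t c : nat -> R) (mu : R) : R :=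
  sum_lt m (fun k => ind_Ico (piece_start bb t c k) (piece_end bb t c k) mu) +
  ind_Ici (piece_start bb t c m) mu.

Section ImageIndicator.

Variables (bb : R) (f : R -> ER) (q : R) (m : nat) (t c : nat -> R).
Hypothesis Hb : 0 < bb.
Hypothesis Hp : affine_pieces bb f q m t c.
Hypothesis Hsi : strictly_incr f.

Let ps := piece_start bb t c.
Let pe := piece_end bb t c.

Lemma piece_end_le_start k : (k < m)%nat -> ps k < pe k <= ps (S k).
Proof.
  destruct Hp as [_ Hst _ Hin Hlast]. intros Hk. pose proof (Hst k Hk).
  unfold ps, pe, piece_start, piece_end. split; [nra|].
  assert (Hf1 : f (t (S k)) = Some (bb * t (S k) + c (S k))).
  { destruct (Nat.eq_dec (S k) m) as [<-|]; [apply Hlast; lra|].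
    apply Hin; [lia|]. pose proof (Hst (S k) ltac:(lia)). lra. }
  (* [f] is nondecreasing across the breakpoint [t (S k)]. *)
  apply Rplus_le_compat_l, Rle_plus_epsilon. intros eps Heps.
  set (h := Rmin ((t (S k) - t k) / 2) (eps / bb)).
  assert (Hh : 0 < h /\ h <= (t (S k) - t k) / 2 /\ h <= eps / bb).
  { assert (0 < eps / bb) by (apply Rdiv_lt_0_compat; lra). unfold h; destruct_min_max; lra. }
  assert (bb * h <= eps).
  { apply Rle_trans with (bb * (eps / bb)); [apply Rmult_le_compat_l; lra|]. right; field; lra. }
  pose proof (proj1 Hsi (t (S k) - h) (t (S k)) ltac:(lra)) as E.
  rewrite Hf1, (Hin k) in E by (auto; lra). simpl in E. nra.
Qed.

Lemma sum_ind_pieces_01 mu m' : (m' <= m)%nat ->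
  let s := sum_lt m' (fun k => ind_Ico (ps k) (pe k) mu) in s = 0 \/ (s = 1 /\ mu < ps m').
Proof.
  induction m'; intros Hm; simpl; [auto|].
  pose proof (piece_end_le_start m' ltac:(lia)).
  destruct (IHm' ltac:(lia)) as [->|[-> E]]; unfold ind_Ico;
    destruct Rle_dec; try destruct Rlt_dec; lra.
Qed.

Lemma image_ind_01 mu : image_ind bb m t c mu = 0 \/ image_ind bb m t c mu = 1.
Proof.
  unfold image_ind. fold ps pe.
  destruct (sum_ind_pieces_01 mu m (le_n m)) as [->|[-> E]]; unfold ind_Ici; destruct Rle_dec; lra.
Qed.

Lemma image_ind_iff mu : image_ind bb m t c mu = 1 <-> exists x, f x = Some mu.
Proof.
  destruct Hp as [Ht0 Hst Hnone Hin Hlast].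
  assert (Hinv : forall k, bb * ((mu - c k) / bb) = mu - c k) by (intros; field; lra).
  assert (Hnn : forall k, (k < m)%nat -> 0 <= ind_Ico (ps k) (pe k) mu)
    by (intros k _; destruct (ind_Ico_01 (ps k) (pe k) mu); lra).
  pose proof (image_ind_01 mu) as H01.
  unfold image_ind, ps, pe, piece_start, piece_end in *. split.
  - intros H. destruct (Rle_dec (bb * t m + c m) mu).
    + exists ((mu - c m) / bb). pose proof (Hinv m).
      rewrite Hlast by nra. f_equal. lra.
    + unfold ind_Ici in H. destruct Rle_dec; [contradiction|]. rewrite Rplus_0_r in H.
      destruct (classic (exists k, (k < m)%nat /\
                   ind_Ico (bb * t k + c k) (bb * t (S k) + c k) mu = 1)) as [[k [Hk Hik]]|Hno].
      * unfold ind_Ico in Hik. destruct Rle_dec; [|lra]. destruct Rlt_dec; [|lra].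
        exists ((mu - c k) / bb). pose proof (Hinv k).
        rewrite (Hin k) by (auto; nra). f_equal. lra.
      * rewrite (sum_lt_ext m _ (fun _ => 0)), sum_lt_const in H; [lra|].
        intros k Hk. destruct (ind_Ico_01 (bb * t k + c k) (bb * t (S k) + c k) mu); auto.
        exfalso; eauto.
  - intros [x Hx]. destruct (Rlt_dec x q); [rewrite Hnone in Hx; auto; discriminate|].
    destruct (Rle_dec (t m) x).
    + rewrite Hlast in Hx by auto. injection Hx as <-.
      assert (ind_Ici (bb * t m + c m) (bb * x + c m) = 1)
        by (unfold ind_Ici; destruct Rle_dec; nra).
      pose proof (sum_lt_nonneg m _ Hnn). destruct H01; lra.
    + destruct (grid_cell t m x Hst) as [k [Hk Hxk]]; [lra|].
      rewrite (Hin k) in Hx by auto. injection Hx as <-.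
      assert (ind_Ico (bb * t k + c k) (bb * t (S k) + c k) (bb * x + c k) = 1)
        by (unfold ind_Ico; destruct Rle_dec; [destruct Rlt_dec|]; nra).
      pose proof (sum_lt_ge_term m _ k Hnn Hk).
      destruct (ind_Ici_01 (bb * t m + c m) (bb * x + c k)); destruct H01; lra.
Qed.

End ImageIndicator.

Definition breaks_on_grid (g : nat -> R) (n : nat) (bb : R) (m : nat) (t c : nat -> R) : Prop :=
  (forall k, (k <= m)%nat -> on_grid g n (piece_start bb t c k)) /\
  (forall k, (k < m)%nat -> on_grid g n (piece_end bb t c k)).

Section ImageOnGrid.

Variables (g : nat -> R) (n : nat) (bb : R) (m : nat) (t c : nat -> R).
Hypothesis Hg : strict_grid g n.
Hypothesis Hbr : breaks_on_grid g n bb m t c.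

Lemma image_ind_cell k x : (k < n)%nat -> g k <= x < g (S k) ->
  image_ind bb m t c x = image_ind bb m t c (g k).
Proof.
  intros Hk Hx. destruct Hbr as [Hps Hpe]. unfold image_ind. f_equal.
  - apply sum_lt_ext; intros. apply (ind_Ico_cell g n); auto. apply Hps; lia.
  - apply (ind_Ici_cell g n); auto.
Qed.

Lemma image_ind_below x : x < g O -> image_ind bb m t c x = 0.
Proof.
  intros Hx. destruct Hbr as [Hps _].
  assert (H0 : forall k, (k <= m)%nat -> x < piece_start bb t c k).
  { intros k Hk. destruct (Hps k Hk) as [j [Hj Ej]].
    assert (g O <= g j) by (apply (grid_le_iff g n _ _ Hg); lia). lra. }
  unfold image_ind.
  rewrite (sum_lt_ext m _ (fun _ => 0)), sum_lt_const.
  - unfold ind_Ici. destruct Rle_dec; [specialize (H0 m (le_n m)); lra|ring].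
  - intros k Hk. unfold ind_Ico. destruct Rle_dec; auto. specialize (H0 k ltac:(lia)); lra.
Qed.

Lemma image_ind_above x : g n <= x -> image_ind bb m t c x = 1.
Proof.
  intros Hx. destruct Hbr as [Hps Hpe].
  assert (Hle : forall p, on_grid g n p -> p <= x).
  { intros p [j [Hj <-]]. assert (g j <= g n) by (apply (grid_le_iff g n _ _ Hg); lia). lra. }
  unfold image_ind.
  rewrite (sum_lt_ext m _ (fun _ => 0)), sum_lt_const.
  - unfold ind_Ici. destruct Rle_dec as [|E]; [ring|]. exfalso; apply E, Hle, Hps; lia.
  - intros k Hk. unfold ind_Ico. destruct Rle_dec; auto. destruct Rlt_dec as [E|]; auto.
    exfalso. pose proof (Hle _ (Hpe k Hk)). lra.
Qed.

Lemma grid_integral_image_ind G : 0 < bb -> strict_grid t m ->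
  grid_integral g n G (image_ind bb m t c) =
  sum_lt m (fun k => G (piece_end bb t c k) - G (piece_start bb t c k)) +
  (G (g n) - G (piece_start bb t c m)).
Proof.
  intros Hb Ht. destruct Hbr as [Hps Hpe].
  unfold image_ind. rewrite grid_integral_plus, grid_integral_sum_lt. f_equal.
  - apply sum_lt_ext. intros k Hk.
    destruct (Hps k ltac:(lia)) as [ia [Hia Ea]], (Hpe k Hk) as [ic [Hic Ec]].
    rewrite <- Ea, <- Ec. apply grid_integral_ind_Ico; auto. split; auto.
    apply Nat.lt_le_incl, (grid_lt_iff g n _ _ Hg); auto. rewrite Ea, Ec.
    unfold piece_start, piece_end. pose proof (Ht k Hk). nra.
  - destruct (Hps m (le_n m)) as [ia [Hia Ea]]. rewrite <- Ea.
    apply grid_integral_ind_Ici; auto.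
Qed.

End ImageOnGrid.

Lemma sum_pieces_regroup m (A B : nat -> R) X :
  sum_lt m (fun k => A k - B k) + (X - B m) = X - B O + sum_lt m (fun k => A k - B (S k)).
Proof. induction m; simpl; lra. Qed.

Lemma image_length_total bb q m t c X : t O = q -> c m = - q ->
  sum_lt m (fun k => piece_end bb t c k - piece_start bb t c k) + (X - piece_start bb t c m) =
  X - bb * q + q.
Proof.
  intros Ht0 Hcm. rewrite sum_pieces_regroup.
  rewrite (sum_lt_ext m _ (fun k => - c (S k) - - c k)), (sum_lt_telescope (fun k => - c k)).
  - unfold piece_start. rewrite Ht0, Hcm. ring.
  - intros k _. unfold piece_end, piece_start. ring.
Qed.

Definition sin_pi_sq (x : R) : R := sin (PI * x) ^ 2.

Lemma sin_pi_sq_shift x z : sin_pi_sq (IZR z + x) = sin_pi_sq x.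
Proof.
  assert (Hnat : forall x k, sin_pi_sq (x + INR k) = sin_pi_sq x).
  { intros y k. unfold sin_pi_sq. induction k; [simpl; rewrite Rplus_0_r; auto|].
    rewrite S_INR. replace (PI * (y + (INR k + 1))) with (PI * (y + INR k) + PI) by ring.
    rewrite neg_sin, <- IHk. ring. }
  destruct (Z_le_gt_dec 0 z).
  - rewrite <- (Z2Nat.id z), <- INR_IZR_INZ, Rplus_comm by lia. apply Hnat.
  - replace z with (- Z.of_nat (Z.to_nat (- z)))%Z by lia. rewrite opp_IZR, <- INR_IZR_INZ.
    rewrite <- (Hnat (- INR (Z.to_nat (- z)) + x) (Z.to_nat (- z))). f_equal; ring.
Qed.

Lemma sin_pi_sq_nonneg x : 0 <= sin_pi_sq x.
Proof. unfold sin_pi_sq. simpl. rewrite Rmult_1_r. apply Rle_0_sqr. Qed.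

Lemma sin_pi_sq_eq0 x : sin_pi_sq x = 0 -> exists z, x = IZR z.
Proof.
  unfold sin_pi_sq; intro H. simpl in H. rewrite Rmult_1_r in H. apply Rsqr_0_uniq in H.
  destruct (sin_eq_0_0 _ H) as [z Hz]. exists z. pose proof PI_RGT_0.
  apply Rmult_eq_reg_l with PI; [rewrite Hz; ring|lra].
Qed.

Lemma sin_pi_sq_0 : sin_pi_sq 0 = 0.
Proof. unfold sin_pi_sq. rewrite Rmult_0_r, sin_0. ring. Qed.

(* At a jump [b t] is an integer, so the shift [c k -> c (S k)] is invisible to [sin_pi_sq]
   and the sum telescopes to the integers [b q] and [c m = - q]. *)
Lemma image_sin_pi_sq_total bb q m t c X (Q : Z) : t O = q -> c m = - q -> q = IZR Q ->
  (exists z0, bb * q = IZR z0) ->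
  (forall k, (k < m)%nat -> c k = c (S k) \/ exists z, bb * t (S k) = IZR z) ->
  sum_lt m (fun k => sin_pi_sq (piece_end bb t c k) - sin_pi_sq (piece_start bb t c k)) +
  (sin_pi_sq X - sin_pi_sq (piece_start bb t c m)) = sin_pi_sq X - sin_pi_sq 0.
Proof.
  intros Ht0 Hcm HQ [z0 Hz0] Hjump.
  rewrite (sum_pieces_regroup m (fun k => sin_pi_sq (piece_end bb t c k))).
  rewrite (sum_lt_ext m _ (fun k => - sin_pi_sq (c (S k)) - - sin_pi_sq (c k))).
  - rewrite (sum_lt_telescope (fun k => - sin_pi_sq (c k))). unfold piece_start.
    rewrite Ht0, Hz0, sin_pi_sq_shift, Hcm, HQ, <- opp_IZR.
    rewrite <- (Rplus_0_r (IZR (- Q))), sin_pi_sq_shift. ring.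
  - intros k Hk. unfold piece_end, piece_start.
    destruct (Hjump k Hk) as [E|[z E]]; [rewrite E; ring|]. rewrite E, !sin_pi_sq_shift. ring.
Qed.

Definition finiteb (o : ER) : bool := match o with Some _ => true | None => false end.

Lemma eqb_ER_Some o a : eqb_ER o (Some a) = true <-> o = Some a.
Proof.
  destruct o; simpl; [|split; discriminate].
  destruct Req_EM_T; subst; split; intro; auto; try discriminate; congruence.
Qed.

Lemma ole_trans x y z : ole x y -> ole y z -> ole x z.
Proof. destruct x, y, z; simpl; auto; try lra; tauto. Qed.

Lemma strictly_incr_inj f x y mu : strictly_incr f -> f x = Some mu -> f y = Some mu -> x = y.
Proof.
  intros [_ Hlt] Hx Hy. destruct (Rtotal_order x y) as [H|[H|H]]; auto; exfalso.
  - pose proof (Hlt x y H) as E. rewrite Hx, Hy in E. apply (Rlt_irrefl mu), E; discriminate.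
  - pose proof (Hlt y x H) as E. rewrite Hx, Hy in E. apply (Rlt_irrefl mu), E; discriminate.
Qed.

Lemma strictly_incr_finite f x y : strictly_incr f -> x <= y ->
  finiteb (f x) = true -> finiteb (f y) = true.
Proof.
  intros [Hle _] Hxy. pose proof (Hle x y Hxy). destruct (f x), (f y); simpl in *; auto.
Qed.

Section DualTuple.

Variables (b d : nat) (phi psi : nat -> R -> ER).
Hypothesis Hphi : inPhi b d phi psi.

Lemma phi_le_phi1 i q : (1 <= i <= d)%nat -> ole (phi i q) (phi 1%nat q).
Proof.
  destruct Hphi as [Hord _]. intros Hi. induction i; [lia|].
  destruct (Nat.eq_dec i O) as [->|]; [destruct (phi 1%nat q); simpl; auto; lra|].
  apply ole_trans with (phi i q); [apply Hord; lia|apply IHi; lia].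
Qed.

Lemma psi_finite_upward_closed x : upward_closed d (fun j => finiteb (psi j x)).
Proof.
  destruct Hphi as [_ [_ [_ [Hpord _]]]]. intros j Hj E. pose proof (Hpord j Hj x).
  destruct (psi j x), (psi (S j) x); simpl in *; auto.
Qed.

(* Counting the pairs (i, q) with [phi_i q = x] in two ways, through condition (4). *)
Lemma count_psi_finite (x : R) (F : nat -> R) :
  (forall i, (1 <= i <= d)%nat -> F i = 0 \/ F i = 1) ->
  (forall i, (1 <= i <= d)%nat -> (F i = 1 <-> exists q, phi i q = Some x)) ->
  INR (count_idx d (fun j => finiteb (psi j x))) = rsum d F.
Proof.
  destruct Hphi as [_ [Hsr [_ [_ [_ Hcount]]]]]. intros H01 HF.
  destruct (finite_family_list (fun i q => phi i q = Some x) d) as [L [Hnd HL]].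
  { intros i q q' Hi E1 E2. exact (strictly_incr_inj (phi i) q q' x (proj1 (Hsr i Hi)) E1 E2). }
  assert (Hpsi : count_idx d (fun j => finiteb (psi j x)) =
                 count_idx d (fun j => existsb (fun q => eqb_ER (psi j x) (Some q)) L)).
  { apply count_idx_ext. intros j Hj. destruct (psi j x) as [q|] eqn:E; cbn [finiteb].
    - symmetry. apply existsb_exists. exists q. split; [|apply eqb_ER_Some; auto].
      destruct (count_idx_pos d (fun i => eqb_ER (phi i q) (Some x))) as [i [Hi Hiq]].
      + rewrite Hcount. apply (count_idx_ge1 d _ j Hj). apply eqb_ER_Some; auto.
      + apply HL. exists i. split; auto. apply eqb_ER_Some; auto.
    - symmetry. apply Bool.not_true_iff_false. intros [q [_ Hq]]%existsb_exists. discriminate. }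
  rewrite Hpsi, <- count_idx_fibers; auto.
  2:{ intros j q q' _ E1 E2. apply eqb_ER_Some in E1, E2. congruence. }
  rewrite (map_ext_in _ (fun q => count_idx d (fun i => eqb_ER (phi i q) (Some x))))
    by (intros; symmetry; apply Hcount).
  rewrite count_idx_fibers, count_idx_INR; auto.
  - apply rsum_ext. intros i Hi. destruct (existsb _ L) eqn:E.
    + apply existsb_exists in E as [q [_ Hq]]. symmetry.
      apply HF; auto. exists q. apply eqb_ER_Some; auto.
    + destruct (H01 i Hi) as [E0|E1]; auto. exfalso.
      apply HF in E1 as [q Hq]; auto. apply Bool.not_true_iff_false in E. apply E.
      apply existsb_exists. exists q. split; [apply HL; eauto|apply eqb_ER_Some; auto].
  - intros i q q' Hi E1 E2. apply eqb_ER_Some in E1, E2.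
    exact (strictly_incr_inj (phi i) q q' x (proj1 (Hsr i Hi)) E1 E2).
Qed.

(* If [psi_j mu = q], some [phi_i] takes the value [mu] at [q], and [phi_1] dominates
   [phi_i]. *)
Lemma mu1_set_iff j mu : (1 <= j <= d)%nat ->
  (mu1_set phi psi j mu <-> finiteb (psi j mu) = true).
Proof.
  destruct Hphi as [_ [_ [_ [_ [_ Hcount]]]]]. intros Hj. unfold mu1_set. split.
  - intros [H|[q [H _]]]; [destruct (psi j mu); simpl in *; tauto|]. rewrite H; reflexivity.
  - destruct (psi j mu) as [q|] eqn:Eq; [intros _|discriminate].
    destruct (count_idx_pos d (fun i => eqb_ER (phi i q) (Some mu))) as [i [Hi Hp]].
    { rewrite Hcount. apply (count_idx_ge1 d _ j Hj). apply eqb_ER_Some; auto. }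
    apply eqb_ER_Some in Hp. pose proof (phi_le_phi1 i q Hi) as Ho. rewrite Hp in Ho.
    destruct (phi 1%nat q) as [v|] eqn:Ev; simpl in Ho; [|contradiction].
    destruct Ho as [Hlt|<-]; [left; simpl; rewrite Ev; exact Hlt|].
    right. exists q. do 2 (split; auto).
    assert (count_idx 1 (fun i' => eqb_ER (phi i' q) (Some mu)) <= 1)%nat
      by (simpl; destruct eqb_ER; lia).
    assert (1 <= count_idx j (fun j' => eqb_ER (psi j' mu) (Some q)))%nat
      by (apply (count_idx_ge1 j _ j); [lia|apply eqb_ER_Some; auto]).
    lia.
Qed.

End DualTuple.

Record piece_data : Type :=
  mk_piece_data { pd_Q : Z; pd_m : nat; pd_t : nat -> R; pd_c : nat -> R }.

Definition integral_pieces (b : nat) (f : R -> ER) (D : piece_data) : Prop :=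
  affine_pieces (INR b) f (IZR (pd_Q D)) (pd_m D) (pd_t D) (pd_c D) /\
  pd_c D (pd_m D) = - IZR (pd_Q D) /\
  (forall k, (k < pd_m D)%nat ->
     pd_c D k = pd_c D (S k) \/ exists z, INR b * pd_t D (S k) = IZR z).

Lemma integral_pieces_exist (b : nat) (f : R -> ER) : (1 <= b)%nat -> right_cont f ->
  (exists Q : Z, cond3 b f (IZR Q)) ->
  (forall x, ~ cont_at f x -> exists z : Z, x = IZR z / INR b) ->
  exists D, integral_pieces b f D.
Proof.
  intros Hb Hrc [Q HQ] Hdisc. assert (Hbpos : 0 < INR b) by (apply lt_0_INR; lia).
  destruct (affine_pieces_of_cond3 b f (IZR Q) Hb HQ Hrc) as [m [t [c [Hp Hcm]]]].
  exists (mk_piece_data Q m t c). split; [exact Hp|split; [exact Hcm|]]. simpl.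
  intros k Hk. destruct (Req_dec (c k) (c (S k))) as [E|E]; [left; auto|right].
  destruct (Hdisc (t (S k)) (not_cont_at_jump (INR b) f (IZR Q) m t c k Hbpos Hp Hk E)) as [z ->].
  exists z. field. lra.
Qed.

Lemma grid_through_breakpoints (bb : R) d (PD : nat -> piece_data) : exists n g, strict_grid g n /\
  forall i, (1 <= i <= d)%nat -> breaks_on_grid g n bb (pd_m (PD i)) (pd_t (PD i)) (pd_c (PD i)).
Proof.
  set (ends := fun i =>
         map (piece_start bb (pd_t (PD i)) (pd_c (PD i))) (seq 0 (S (pd_m (PD i)))) ++
         map (piece_end bb (pd_t (PD i)) (pd_c (PD i))) (seq 0 (pd_m (PD i)))).
  destruct (grid_exists (flat_map ends (seq 1 d))) as [n [g [Hg Hcov]]].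
  exists n, g. split; auto. intros i Hi. split; intros k Hk; apply Hcov, in_flat_map;
    exists i; (split; [apply in_seq; lia|]); apply in_app_iff; [left|right];
    apply in_map, in_seq; lia.
Qed.

Section Dimension.

Variables (b d : nat) (phi psi : nat -> R -> ER).
Hypothesis Hb : (1 <= b)%nat.
Hypothesis Hphi : inPhi b d phi psi.
Variable PD : nat -> piece_data.
Hypothesis HPD : forall i, (1 <= i <= d)%nat -> integral_pieces b (phi i) (PD i).
Variables (g : nat -> R) (n : nat).
Hypothesis Hg : strict_grid g n.
Hypothesis Hbreaks : forall i, (1 <= i <= d)%nat ->
  breaks_on_grid g n (INR b) (pd_m (PD i)) (pd_t (PD i)) (pd_c (PD i)).

Definition image_ind_phi (i : nat) : R -> R :=
  image_ind (INR b) (pd_m (PD i)) (pd_t (PD i)) (pd_c (PD i)).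

Let Hbpos : 0 < INR b.
Proof. apply lt_0_INR; lia. Qed.

Let Hsi i : (1 <= i <= d)%nat -> strictly_incr (phi i).
Proof. destruct Hphi as [_ [Hsr _]]. intros Hi. apply (Hsr i Hi). Qed.

Lemma image_ind_phi_01 i x : (1 <= i <= d)%nat -> image_ind_phi i x = 0 \/ image_ind_phi i x = 1.
Proof.
  intros Hi. destruct (HPD i Hi) as [Hp _].
  exact (image_ind_01 _ _ _ _ _ _ Hbpos Hp (Hsi i Hi) x).
Qed.

Lemma image_ind_phi_iff i x : (1 <= i <= d)%nat ->
  (image_ind_phi i x = 1 <-> exists q, phi i q = Some x).
Proof.
  intros Hi. destruct (HPD i Hi) as [Hp _].
  exact (image_ind_iff _ _ _ _ _ _ Hbpos Hp (Hsi i Hi) x).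
Qed.

Lemma image_ind_phi_cell i k x : (1 <= i <= d)%nat -> (k < n)%nat -> g k <= x < g (S k) ->
  image_ind_phi i x = image_ind_phi i (g k).
Proof. intros Hi. apply (image_ind_cell g n); auto. Qed.

Lemma image_ind_phi_below i x : (1 <= i <= d)%nat -> x < g O -> image_ind_phi i x = 0.
Proof. intros Hi. apply (image_ind_below g n); auto. Qed.

Lemma image_ind_phi_above i x : (1 <= i <= d)%nat -> g n <= x -> image_ind_phi i x = 1.
Proof. intros Hi. apply (image_ind_above g n); auto. Qed.

Lemma count_psi_finite_image x :
  INR (count_idx d (fun j => finiteb (psi j x))) = rsum d (fun i => image_ind_phi i x).
Proof.
  apply (count_psi_finite b d phi psi Hphi); intros i Hi;
    [apply image_ind_phi_01|apply image_ind_phi_iff]; auto.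
Qed.

Lemma count_psi_finite_cell k x : (k < n)%nat -> g k <= x < g (S k) ->
  count_idx d (fun j => finiteb (psi j x)) = count_idx d (fun j => finiteb (psi j (g k))).
Proof.
  intros Hk Hx. apply INR_eq. rewrite !count_psi_finite_image. apply rsum_ext. intros i Hi.
  apply image_ind_phi_cell; auto.
Qed.

Lemma count_psi_finite_below x : x < g O -> count_idx d (fun j => finiteb (psi j x)) = O.
Proof.
  intros Hx. apply INR_eq. rewrite count_psi_finite_image, (rsum_ext d _ (fun _ => 0)), rsum_const.
  - simpl; ring.
  - intros i Hi. apply image_ind_phi_below; auto.
Qed.

Lemma count_psi_finite_above x : g n <= x -> count_idx d (fun j => finiteb (psi j x)) = d.
Proof.
  intros Hx. apply INR_eq. rewrite count_psi_finite_image, (rsum_ext d _ (fun _ => 1)), rsum_const.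
  - ring.
  - intros i Hi. apply image_ind_phi_above; auto.
Qed.

Lemma psi_threshold j : (1 <= j <= d)%nat ->
  exists K, (K <= n)%nat /\ forall x, finiteb (psi j x) = true <-> g K <= x.
Proof.
  intros Hj.
  assert (Hkey : forall x, finiteb (psi j x) = true <->
                           (d + 1 <= j + count_idx d (fun j => finiteb (psi j x)))%nat)
    by (intros x;
        exact (upward_closed_count d _ (psi_finite_upward_closed b d phi psi Hphi x) j Hj)).
  apply (grid_threshold g n (fun x => finiteb (psi j x)) Hg).
  - destruct Hphi as [_ [_ [_ [_ [Hpsr _]]]]]. intros x y Hxy.
    apply strictly_incr_finite; auto. apply (Hpsr j Hj).
  - intros k x Hk Hx. apply Bool.eq_iff_eq_true. rewrite !Hkey, (count_psi_finite_cell k x); tauto.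
  - intros x Hx. apply Bool.not_true_iff_false. rewrite Hkey, count_psi_finite_below; auto. lia.
  - apply Hkey. rewrite count_psi_finite_above; [lia|lra].
Qed.

Variable K : nat -> nat.
Hypothesis HK : forall j, (1 <= j <= d)%nat ->
  (K j <= n)%nat /\ forall x, finiteb (psi j x) = true <-> g (K j) <= x.

Lemma ind_Ici_psi_threshold j x : (1 <= j <= d)%nat ->
  ind_Ici (g (K j)) x = if finiteb (psi j x) then 1 else 0.
Proof.
  intros Hj. destruct (HK j Hj) as [_ HKj]. unfold ind_Ici.
  destruct Rle_dec as [E|E], (finiteb (psi j x)) eqn:Ef; auto; exfalso.
  - apply HKj in E. congruence.
  - apply E, HKj; auto.
Qed.

Lemma rsum_image_ind_phi x :
  rsum d (fun i => image_ind_phi i x) = rsum d (fun j => ind_Ici (g (K j)) x).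
Proof.
  rewrite <- count_psi_finite_image, count_idx_INR. apply rsum_ext. intros j Hj.
  rewrite ind_Ici_psi_threshold; auto.
Qed.

Lemma grid_integral_image_ind_phi G i : (1 <= i <= d)%nat ->
  grid_integral g n G (image_ind_phi i) =
  sum_lt (pd_m (PD i)) (fun k => G (piece_end (INR b) (pd_t (PD i)) (pd_c (PD i)) k) -
                                 G (piece_start (INR b) (pd_t (PD i)) (pd_c (PD i)) k)) +
  (G (g n) - G (piece_start (INR b) (pd_t (PD i)) (pd_c (PD i)) (pd_m (PD i)))).
Proof.
  intros Hi. destruct (HPD i Hi) as [Hp _].
  apply grid_integral_image_ind; auto. apply (pieces_grid _ _ _ _ _ _ Hp).
Qed.

Lemma grid_length_image_phi i : (1 <= i <= d)%nat ->
  grid_integral g n (fun x => x) (image_ind_phi i) =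
  g n - INR b * IZR (pd_Q (PD i)) + IZR (pd_Q (PD i)).
Proof.
  intros Hi. rewrite grid_integral_image_ind_phi by auto. destruct (HPD i Hi) as [Hp [Hcm _]].
  apply image_length_total; auto. apply (pieces_start _ _ _ _ _ _ Hp).
Qed.

Lemma psi_threshold_integer j : (1 <= j <= d)%nat -> exists z, g (K j) = IZR z.
Proof.
  intros Hj.
  (* Integrate [sum_i image_ind_phi i = sum_j ind_Ici (g (K j))] against [sin_pi_sq]: each
     image contributes [sin_pi_sq (g n)], hence [sum_j sin_pi_sq (g (K j)) = 0]. *)
  assert (E : rsum d (fun i => grid_integral g n sin_pi_sq (image_ind_phi i)) =
              rsum d (fun j => grid_integral g n sin_pi_sq (ind_Ici (g (K j))))).
  { rewrite <- !grid_integral_rsum. apply grid_integral_ext. intros; apply rsum_image_ind_phi. }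
  rewrite (rsum_ext d _ (fun _ => sin_pi_sq (g n) - sin_pi_sq 0)) in E.
  2:{ intros i Hi. rewrite grid_integral_image_ind_phi by auto.
      destruct (HPD i Hi) as [Hp [Hcm Hjump]].
      apply (image_sin_pi_sq_total _ (IZR (pd_Q (PD i))) _ _ _ _ (pd_Q (PD i))); auto.
      - apply (pieces_start _ _ _ _ _ _ Hp).
      - exists (Z.of_nat b * pd_Q (PD i))%Z. rewrite mult_IZR, <- INR_IZR_INZ. reflexivity. }
  rewrite (rsum_ext d (fun j => grid_integral g n sin_pi_sq (ind_Ici (g (K j))))
                     (fun j => sin_pi_sq (g n) + -1 * sin_pi_sq (g (K j)))) in E.
  2:{ intros j' Hj'. rewrite grid_integral_ind_Ici by (auto; apply HK; auto). ring. }
  rewrite rsum_const, rsum_plus, rsum_const, rsum_scal, sin_pi_sq_0 in E.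
  apply sin_pi_sq_eq0.
  apply (rsum_nonneg_eq0 d (fun j => sin_pi_sq (g (K j)))); auto; [|lra].
  intros; apply sin_pi_sq_nonneg.
Qed.

Lemma is_inf_mu1_set j : (1 <= j <= d)%nat -> is_inf (mu1_set phi psi j) (g (K j)).
Proof.
  intros Hj. destruct (HK j Hj) as [_ HKj].
  assert (Hset : forall mu, mu1_set phi psi j mu <-> g (K j) <= mu)
    by (intros mu; rewrite (mu1_set_iff b d phi psi Hphi j mu Hj); apply HKj).
  split.
  - intros s Hs. apply Hset; auto.
  - intros m' Hm'. apply Hm', Hset. lra.
Qed.

Definition image_diff_length (i i' : nat) : R :=
  grid_integral g n (fun x => x) (fun x => image_ind_phi i' x * (1 - image_ind_phi i x)).

Lemma is_Leb_image_diff i i' : (1 <= i < i')%nat -> (i' <= d)%nat ->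
  is_Leb (image_diff phi i i') (image_diff_length i i').
Proof.
  intros Hii' Hi'd.
  assert (Hi : (1 <= i <= d)%nat) by lia. assert (Hi' : (1 <= i' <= d)%nat) by lia.
  apply (is_Leb_grid_step g n); auto.
  - intros x. unfold image_diff. rewrite <- !image_ind_phi_iff by auto.
    destruct (image_ind_phi_01 i x Hi) as [E|E], (image_ind_phi_01 i' x Hi') as [E'|E'];
      rewrite E, E'; split; intros H; lra || tauto.
  - intros x.
    destruct (image_ind_phi_01 i x Hi) as [E|E], (image_ind_phi_01 i' x Hi') as [E'|E'];
      rewrite E, E'; [left|right|left|left]; ring.
  - intros x [[q Hq] Hnot]. split.
    + destruct (Rle_dec (g O) x); auto. exfalso.
      assert (E : image_ind_phi i' x = 1) by (apply image_ind_phi_iff; eauto).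
      rewrite image_ind_phi_below in E; auto; lra.
    + destruct (Rlt_dec x (g n)); auto. exfalso. apply Hnot, image_ind_phi_iff; auto.
      apply image_ind_phi_above; auto; lra.
  - intros k x Hk Hx. rewrite !(image_ind_phi_cell _ k x); auto.
Qed.

Lemma rsum_image_diff_pointwise x :
  rsum d (fun i' => rsum (i' - 1) (fun i => image_ind_phi i' x * (1 - image_ind_phi i x))) =
  rsum d (fun i => (INR i - 1 - INR d) * image_ind_phi i x) +
  rsum d (fun j => INR j * ind_Ici (g (K j)) x).
Proof.
  rewrite (rsum_ext d (fun j => INR j * ind_Ici (g (K j)) x)
                      (fun j => INR j * (if finiteb (psi j x) then 1 else 0)))
    by (intros; rewrite ind_Ici_psi_threshold; auto).
  apply rsum_pairs_identity.
  - intros; apply image_ind_phi_01; auto.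
  - apply (psi_finite_upward_closed b d phi psi Hphi).
  - symmetry; apply count_psi_finite_image.
Qed.

Lemma dim_sum_image_diff_length :
  dim_sum d image_diff_length =
  rsum d (fun i => (INR i - 1 - INR d) * (g n - INR b * IZR (pd_Q (PD i)) + IZR (pd_Q (PD i)))) +
  rsum d (fun j => INR j * (g n - g (K j))).
Proof.
  unfold dim_sum, image_diff_length.
  rewrite (rsum_ext d _ (fun i' => grid_integral g n (fun x => x)
             (fun x => rsum (i' - 1) (fun i => image_ind_phi i' x * (1 - image_ind_phi i x)))))
    by (intros; rewrite grid_integral_rsum; auto).
  rewrite <- grid_integral_rsum.
  rewrite (grid_integral_ext g n (fun x => x) _
             (fun x => rsum d (fun i => (INR i - 1 - INR d) * image_ind_phi i x) +
                       rsum d (fun j => INR j * ind_Ici (g (K j)) x)))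
    by (intros; apply rsum_image_diff_pointwise).
  rewrite grid_integral_plus, !grid_integral_rsum. f_equal; apply rsum_ext; intros i Hi;
    rewrite grid_integral_scal; [rewrite grid_length_image_phi|rewrite grid_integral_ind_Ici]; auto.
  apply HK; auto.
Qed.

(* With [X = g n], the [X]-terms cancel because [sum_i (2 i - 1 - d) = 0]. *)
Lemma dim_sum_congruence :
  dim_sum d image_diff_length + rsum d (fun j => INR j * g (K j)) =
  (INR b - 1) * rsum d (fun i => (INR d + 1 - INR i) * IZR (pd_Q (PD i))).
Proof.
  rewrite dim_sum_image_diff_length, <- rsum_scal, <- !rsum_plus.
  rewrite (rsum_ext d _ (fun i => g n * (2 * INR i + (- 1 - INR d)) +
                                  (INR b - 1) * ((INR d + 1 - INR i) * IZR (pd_Q (PD i)))))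
    by (intros; ring).
  rewrite rsum_plus, rsum_scal, rsum_plus, rsum_scal, rsum_id, rsum_const. field.
Qed.

Lemma dimension_congruence : exists (L : nat -> nat -> R) (M : nat -> R) (z k : Z),
  (forall i i', (1 <= i < i')%nat -> (i' <= d)%nat -> is_Leb (image_diff phi i i') (L i i')) /\
  (forall j, (1 <= j <= d)%nat -> is_inf (mu1_set phi psi j) (M j)) /\
  dim_sum d L = IZR z /\
  dim_sum d L + rsum d (fun j => INR j * M j) = IZR k * (INR b - 1).
Proof.
  destruct (rsum_integer d (fun j => INR j * g (K j))) as [zM HzM].
  { intros j Hj. destruct (psi_threshold_integer j Hj) as [z ->].
    exists (Z.of_nat j * z)%Z. rewrite mult_IZR, <- INR_IZR_INZ. reflexivity. }
  destruct (rsum_integer d (fun i => (INR d + 1 - INR i) * IZR (pd_Q (PD i)))) as [k Hk].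
  { intros i Hi. exists ((Z.of_nat d + 1 - Z.of_nat i) * pd_Q (PD i))%Z.
    rewrite mult_IZR, minus_IZR, plus_IZR, <- !INR_IZR_INZ. reflexivity. }
  pose proof dim_sum_congruence as E. rewrite HzM, Hk in E.
  exists image_diff_length, (fun j => g (K j)), (k * (Z.of_nat b - 1) - zM)%Z, k.
  split; [exact is_Leb_image_diff|split; [exact is_inf_mu1_set|split]].
  - rewrite minus_IZR, mult_IZR, minus_IZR, <- INR_IZR_INZ. simpl IZR. lra.
  - rewrite HzM. lra.
Qed.

End Dimension.

Theorem mainTheorem6 (b d : nat) (hb : (2 <= b)%nat) (hd : (1 <= d)%nat)
  (phi psi : nat -> R -> ER) (hphi : inPhiZ b d phi psi) :
  exists (L : nat -> nat -> R) (M : nat -> R) (z k : Z),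
    (forall i i', (1 <= i < i')%nat -> (i' <= d)%nat ->
       is_Leb (image_diff phi i i') (L i i')) /\
    (forall j, (1 <= j <= d)%nat -> is_inf (mu1_set phi psi j) (M j)) /\
    dim_sum d L = IZR z /\
    dim_sum d L + rsum d (fun j => INR j * M j) = IZR k * (INR b - 1).
Proof.
  destruct hphi as [Hphi HZ]. assert (Hb : (1 <= b)%nat) by lia.
  destruct (choice_on_range (mk_piece_data 0 0 (fun _ => 0) (fun _ => 0)) d
              (fun i D => integral_pieces b (phi i) D)) as [PD HPD].
  { intros i Hi. destruct (HZ i Hi) as [HQ Hdisc]. destruct Hphi as [_ [Hsr _]].
    apply integral_pieces_exist; auto. apply (Hsr i Hi). }
  destruct (grid_through_breakpoints (INR b) d PD) as [n [g [Hg Hbreaks]]].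
  destruct (choice_on_range O d (fun j K => (K <= n)%nat /\
              forall x, finiteb (psi j x) = true <-> g K <= x)) as [K HK].
  { exact (psi_threshold b d phi psi Hb Hphi PD HPD g n Hg Hbreaks). }
  exact (dimension_congruence b d phi psi Hb Hphi PD HPD g n Hg Hbreaks K HK).
Qed.
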